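(* Let $\mathcal{F}:(\mathcal{K},c)\to(\mathcal{K}',c')$ be a bilax functor with compatible Yang–Baxter operator and $b:A\to A$ a $c$-bimonad in $\mathcal{K}$; give $\mathcal{F}(b)$ the $c'$-bimonad structure $\mu^{\mathcal{F}}=\mathcal{F}(\mu)\cdot\mathcal{F}^2_{b,b}$, $\eta^{\mathcal{F}}=\mathcal{F}(\eta)\cdot\mathcal{F}^0_A$, $\Delta^{\mathcal{F}}=\mathcal{F}_{2;b,b}\cdot\mathcal{F}(\Delta)$, $\varepsilon^{\mathcal{F}}=\mathcal{F}_{0;A}\cdot\mathcal{F}(\varepsilon)$. (i) If $D:A\to A$ is a right $b$-module comonad with action $\lhd:D\circ b\Rightarrow D$, then $\mathcal{F}(D)$, with comonad structure $\mathcal{F}_{2;D,D}\cdot\mathcal{F}(\Delta_D)$, $\mathcal{F}_{0;A}\cdot\mathcal{F}(\varepsilon_D)$ and action $\mathcal{F}(\lhd)\cdot\mathcal{F}^2_{D,b}$, is a right $\mathcal{F}(b)$-module comonad in $(\mathcal{K}',c')$. (ii) If $t:A\to A$ is a right $b$-comodule monad with coaction $\rho:t\Rightarrow t\circ b$, then $\mathcal{F}(t)$, with monad structure $\mathcal{F}(\mu_t)\cdot\mathcal{F}^2_{t,t}$, $\mathcal{F}(\eta_t)\cdot\mathcal{F}^0_A$ and coaction $\mathcal{F}_{2;t,b}\cdot\mathcal{F}(\rho)$, is a right $\mathcal{F}(b)$-comodule monad in $(\mathcal{K}',c')$.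
   Context: Conventions: $\circ$ horizontal composition, $\cdot$ vertical composition ($\beta\cdot\alpha$: first $\alpha$), $1$ identity 2-cells. A Yang–Baxter operator $c$ of a 2-category: natural 2-cells $c_{g,f}:g\circ f\Rightarrow f\circ g$ for 1-endocells of a common object, satisfying $(c_{g,f}\circ1)\cdot(1\circ c_{h,f})\cdot(c_{h,g}\circ1)=(1\circ c_{h,g})\cdot(c_{h,f}\circ1)\cdot(1\circ c_{g,f})$ and $c_{\mathrm{id},f}=c_{f,\mathrm{id}}=1$. A $c$-bimonad is a 1-endocell $b$ with monad $(\mu,\eta)$, comonad $(\Delta,\varepsilon)$, $c_{b,b}$ a left and right distributive law for both (e.g. $c_{b,b}\cdot(\mu\circ1)=(1\circ\mu)\cdot(c_{b,b}\circ1)\cdot(1\circ c_{b,b})$, $c_{b,b}\cdot(\eta\circ1)=1\circ\eta$, $(\Delta\circ1)\cdot c_{b,b}=(1\circ c_{b,b})\cdot(c_{b,b}\circ1)\cdot(1\circ\Delta)$, $(\varepsilon\circ1)\cdot c_{b,b}=1\circ\varepsilon$ and their mirror images), with $(\mu\circ\mu)\cdot(1\circ c_{b,b}\circ1)\cdot(\Delta\circ\Delta)=\Delta\cdot\mu$, $\varepsilon\circ\varepsilon=\varepsilon\cdot\mu$, $\eta\circ\eta=\Delta\cdot\eta$, $\varepsilon\cdot\eta=1$. A bilax functor $\mathcal{F}$ is lax ($\mathcal{F}^2,\mathcal{F}^0$) and colax ($\mathcal{F}_2,\mathcal{F}_0$) with a Yang–Baxter operator $\nu_{g,f}:\mathcal{F}(g)\circ\mathcal{F}(f)\Rightarrow\mathcal{F}(f)\circ\mathcal{F}(g)$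 which is a left and right distributive law for the lax and colax structures, satisfies $(1\circ\mathcal{F}_0)\cdot\nu_{\mathrm{id},f}\cdot(\mathcal{F}^0\circ1)=1=(\mathcal{F}_0\circ1)\cdot\nu_{f,\mathrm{id}}\cdot(1\circ\mathcal{F}^0)$, and the bilaxity conditions $(\mathcal{F}^2_{g,h}\circ\mathcal{F}^2_{f,k})\cdot(1\circ\nu_{f,h}\circ1)\cdot(\mathcal{F}_{2;g,f}\circ\mathcal{F}_{2;h,k})=\mathcal{F}_{2;gh,fk}\cdot\mathcal{F}(1\circ c_{f,h}\circ1)\cdot\mathcal{F}^2_{gf,hk}$ (for $A\xrightarrow{k}B\xrightarrow{h}B\xrightarrow{f}B\xrightarrow{g}C$), $\mathcal{F}^0\circ\mathcal{F}^0=\mathcal{F}_{2;\mathrm{id},\mathrm{id}}\cdot\mathcal{F}^0$, $\mathcal{F}_0\circ\mathcal{F}_0=\mathcal{F}_0\cdot\mathcal{F}^2_{\mathrm{id},\mathrm{id}}$, $\mathcal{F}_0\cdot\mathcal{F}^0=1$; it has compatible Yang–Baxter operator if $\nu_{f,g}=c'_{\mathcal{F}(f),\mathcal{F}(g)}$. A right $b$-module is a 1-cell $x$ with $\lhd:x\circ b\Rightarrow x$, $\lhd\cdot(\lhd\circ1)=\lhd\cdot(1\circ\mu)$, $\lhd\cdot(1\circ\eta)=1$; a right $b$-comodule has $\rho:x\Rightarrow x\circ b$, $(\rho\circ1)\cdot\rho=(1\circ\Delta)\cdot\rho$, $(1\circ\varepsilon)\cdot\rho=1$. A right $b$-module comonad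 is a comonad $(D,\Delta_D,\varepsilon_D)$ on $A$ that is a right $b$-module with $(\lhd\circ\lhd)\cdot(1\circ c_{D,b}\circ1)\cdot(\Delta_D\circ\Delta)=\Delta_D\cdot\lhd$ and $\varepsilon_D\cdot\lhd=\varepsilon_D\circ\varepsilon$. A right $b$-comodule monad is a monad $(t,\mu_t,\eta_t)$ on $A$ that is a right $b$-comodule with $(\mu_t\circ\mu)\cdot(1\circ c_{b,t}\circ1)\cdot(\rho\circ\rho)=\rho\cdot\mu_t$ and $\rho\cdot\eta_t=\eta_t\circ\eta$. *)

(* Associativity / unit laws of 1-cells hold as (propositional) equalities;
   2-cells between propositionally equal 1-cells are transported by [eqcell]. *)

Record TwoCatData := {
  Ob : Type;
  Hom1 : Ob -> Ob -> Type;
  id1 : forall A, Hom1 A A;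
  comp1 : forall A B C, Hom1 B C -> Hom1 A B -> Hom1 A C;
  comp1_assoc : forall A B C D (h : Hom1 C D) (g : Hom1 B C) (f : Hom1 A B),
      comp1 _ _ _ (comp1 _ _ _ h g) f = comp1 _ _ _ h (comp1 _ _ _ g f);
  comp1_idl : forall A B (f : Hom1 A B), comp1 _ _ _ (id1 B) f = f;
  comp1_idr : forall A B (f : Hom1 A B), comp1 _ _ _ f (id1 A) = f;
  Hom2 : forall A B, Hom1 A B -> Hom1 A B -> Type;
  id2 : forall A B (f : Hom1 A B), Hom2 A B f f;
  vcomp : forall A B (f g h : Hom1 A B), Hom2 A B g h -> Hom2 A B f g -> Hom2 A B f h;
  hcomp : forall A B C (g g' : Hom1 B C) (f f' : Hom1 A B),
      Hom2 B C g g' -> Hom2 A B f f' ->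
      Hom2 A C (comp1 _ _ _ g f) (comp1 _ _ _ g' f')
}.

Arguments Hom1 {K} : rename.
Arguments Hom2 {K A B} : rename.
Arguments id1 {K} A : rename.
Arguments comp1 {K A B C} : rename.
Arguments comp1_assoc {K A B C D} : rename.
Arguments comp1_idl {K A B} : rename.
Arguments comp1_idr {K A B} : rename.
Arguments id2 {K A B} : rename.
Arguments vcomp {K A B f g h} : rename.
Arguments hcomp {K A B C g g' f f'} : rename.

Declare Scope tc_scope.
Delimit Scope tc_scope with tc.
(* g ∘ f : composite 1-cell (g after f);  β ◇ α : horizontal composite;
   β · α : vertical composite (first α, then β). *)
Notation "g ∘ f" := (comp1 g f) (at level 40, left associativity) : tc_scope.
Notation "β ◇ α" := (hcomp β α) (at level 40, left associativity) : tc_scope.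
Notation "β · α" := (vcomp β α) (at level 50, left associativity) : tc_scope.
Open Scope tc_scope.

Definition eqcell {K : TwoCatData} {A B : Ob K} {f g : Hom1 A B} (p : f = g)
  : Hom2 f g :=
  match p in _ = y return Hom2 f y with eq_refl => id2 f end.

Section Cells.
Context {K : TwoCatData}.
Definition ra {A B C D : Ob K} (h : Hom1 C D) (g : Hom1 B C) (f : Hom1 A B)
  : Hom2 ((h ∘ g) ∘ f) (h ∘ (g ∘ f)) := eqcell (comp1_assoc h g f).
Definition ra' {A B C D : Ob K} (h : Hom1 C D) (g : Hom1 B C) (f : Hom1 A B)
  : Hom2 (h ∘ (g ∘ f)) ((h ∘ g) ∘ f) := eqcell (eq_sym (comp1_assoc h g f)).
Definition lu {A B : Ob K} (f : Hom1 A B) : Hom2 (id1 B ∘ f) f :=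
  eqcell (comp1_idl f).
Definition lu' {A B : Ob K} (f : Hom1 A B) : Hom2 f (id1 B ∘ f) :=
  eqcell (eq_sym (comp1_idl f)).
Definition ru {A B : Ob K} (f : Hom1 A B) : Hom2 (f ∘ id1 A) f :=
  eqcell (comp1_idr f).
Definition ru' {A B : Ob K} (f : Hom1 A B) : Hom2 f (f ∘ id1 A) :=
  eqcell (eq_sym (comp1_idr f)).

(* "1_g ∘ α" for α : x∘y ⇒ x'∘y', written with left bracketing:
   (g∘x)∘y ⇒ (g∘x')∘y *)
Definition lw3 {A B C D : Ob K} (g : Hom1 C D) {x x' : Hom1 B C} {y y' : Hom1 A B}
  (α : Hom2 (x ∘ y) (x' ∘ y')) : Hom2 ((g ∘ x) ∘ y) ((g ∘ x') ∘ y') :=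
  ra' g x' y' · (id2 g ◇ α) · ra g x y.

(* "1_x ∘ α ∘ 1_w" for α : y∘z ⇒ y'∘z' :  (x∘y)∘(z∘w) ⇒ (x∘y')∘(z'∘w) *)
Definition mid {A B C C' D E : Ob K} (x : Hom1 D E)
  {y : Hom1 C D} {z : Hom1 B C} {y' : Hom1 C' D} {z' : Hom1 B C'}
  (α : Hom2 (y ∘ z) (y' ∘ z')) (w : Hom1 A B)
  : Hom2 ((x ∘ y) ∘ (z ∘ w)) ((x ∘ y') ∘ (z' ∘ w)) :=
  ra' x y' (z' ∘ w) · (id2 x ◇ ra y' z' w) · (id2 x ◇ (α ◇ id2 w))
  · (id2 x ◇ ra' y z w) · ra x y (z ∘ w).
End Cells.

Record is_TwoCat (K : TwoCatData) : Prop := {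
  vcomp_assoc : forall (A B : Ob K) (f g h k : Hom1 A B)
      (γ : Hom2 h k) (β : Hom2 g h) (α : Hom2 f g), γ · (β · α) = (γ · β) · α;
  vcomp_idl : forall (A B : Ob K) (f g : Hom1 A B) (α : Hom2 f g), id2 g · α = α;
  vcomp_idr : forall (A B : Ob K) (f g : Hom1 A B) (α : Hom2 f g), α · id2 f = α;
  interchange : forall (A B C : Ob K) (g g' g'' : Hom1 B C) (f f' f'' : Hom1 A B)
      (β : Hom2 g g') (β' : Hom2 g' g'') (α : Hom2 f f') (α' : Hom2 f' f''),
      (β' · β) ◇ (α' · α) = (β' ◇ α') · (β ◇ α);
  hcomp_id : forall (A B C : Ob K) (g : Hom1 B C) (f : Hom1 A B),
      id2 g ◇ id2 f = id2 (g ∘ f);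
  hcomp_assoc : forall (A B C D : Ob K) (h h' : Hom1 C D) (g g' : Hom1 B C)
      (f f' : Hom1 A B) (γ : Hom2 h h') (β : Hom2 g g') (α : Hom2 f f'),
      ra h' g' f' · ((γ ◇ β) ◇ α) = (γ ◇ (β ◇ α)) · ra h g f;
  hcomp_idl : forall (A B : Ob K) (f f' : Hom1 A B) (α : Hom2 f f'),
      lu f' · (id2 (id1 B) ◇ α) = α · lu f;
  hcomp_idr : forall (A B : Ob K) (f f' : Hom1 A B) (α : Hom2 f f'),
      ru f' · (α ◇ id2 (id1 A)) = α · ru f
}.

Definition YBop (K : TwoCatData) :=
  forall (A : Ob K) (g f : Hom1 A A), Hom2 (g ∘ f) (f ∘ g).

Record is_YBop (K : TwoCatData) (c : YBop K) : Prop := {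
  yb_natural : forall (A : Ob K) (g g' f f' : Hom1 A A) (α : Hom2 g g') (β : Hom2 f f'),
      c A g' f' · (α ◇ β) = (β ◇ α) · c A g f;
  yb_YB : forall (A : Ob K) (h g f : Hom1 A A),
      (c A g f ◇ id2 h) · lw3 g (c A h f) · (c A h g ◇ id2 f)
      = lw3 f (c A h g) · (c A h f ◇ id2 g) · lw3 h (c A g f);
  yb_idl : forall (A : Ob K) (f : Hom1 A A), ru f · c A (id1 A) f = lu f;
  yb_idr : forall (A : Ob K) (f : Hom1 A A), lu f · c A f (id1 A) = ru f
}.

Record YBTwoCat := {
  ycat :> TwoCatData;
  ycat_ax : is_TwoCat ycat;
  yc : YBop ycat;
  yc_ax : is_YBop ycat yc
}.
Arguments yc {y} A g f : rename.

Section Structures.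
Context {K : TwoCatData}.

Definition is_monad {A : Ob K} (t : Hom1 A A) (mu : Hom2 (t ∘ t) t)
  (eta : Hom2 (id1 A) t) : Prop :=
  mu · (mu ◇ id2 t) = mu · (id2 t ◇ mu) · ra t t t
  /\ mu · (eta ◇ id2 t) = lu t
  /\ mu · (id2 t ◇ eta) = ru t.

Definition is_comonad {A : Ob K} (d : Hom1 A A) (de : Hom2 d (d ∘ d))
  (ep : Hom2 d (id1 A)) : Prop :=
  ra d d d · (de ◇ id2 d) · de = (id2 d ◇ de) · de
  /\ (ep ◇ id2 d) · de = lu' d
  /\ (id2 d ◇ ep) · de = ru' d.

Definition is_bimonad (c : YBop K) {A : Ob K} (b : Hom1 A A)
  (mu : Hom2 (b ∘ b) b) (eta : Hom2 (id1 A) b)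
  (de : Hom2 b (b ∘ b)) (ep : Hom2 b (id1 A)) : Prop :=
  is_monad b mu eta /\ is_comonad b de ep
  (* c_{b,b} is a left and right distributive law for the monad *)
  /\ c A b b · (mu ◇ id2 b)
     = (id2 b ◇ mu) · ra b b b · (c A b b ◇ id2 b) · ra' b b b
       · (id2 b ◇ c A b b) · ra b b b
  /\ c A b b · (id2 b ◇ mu)
     = (mu ◇ id2 b) · ra' b b b · (id2 b ◇ c A b b) · ra b b b
       · (c A b b ◇ id2 b) · ra' b b b
  /\ c A b b · (eta ◇ id2 b) = (id2 b ◇ eta) · ru' b · lu b
  /\ c A b b · (id2 b ◇ eta) = (eta ◇ id2 b) · lu' b · ru b
  (* ... and for the comonad *)
  /\ (de ◇ id2 b) · c A b b
     = ra' b b b · (id2 b ◇ c A b b) · ra b b b · (c A b b ◇ id2 b)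
       · ra' b b b · (id2 b ◇ de)
  /\ (id2 b ◇ de) · c A b b
     = ra b b b · (c A b b ◇ id2 b) · ra' b b b · (id2 b ◇ c A b b)
       · ra b b b · (de ◇ id2 b)
  /\ (ep ◇ id2 b) · c A b b = lu' b · ru b · (id2 b ◇ ep)
  /\ (id2 b ◇ ep) · c A b b = ru' b · lu b · (ep ◇ id2 b)
  /\ (mu ◇ mu) · mid b (c A b b) b · (de ◇ de) = de · mu
  /\ lu (id1 A) · (ep ◇ ep) = ep · mu
  /\ (eta ◇ eta) · lu' (id1 A) = de · eta
  /\ ep · eta = id2 (id1 A).

Definition is_right_module {A B : Ob K} (b : Hom1 A A) (mu : Hom2 (b ∘ b) b)
  (eta : Hom2 (id1 A) b) (x : Hom1 A B) (act : Hom2 (x ∘ b) x) : Prop :=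
  act · (act ◇ id2 b) = act · (id2 x ◇ mu) · ra x b b
  /\ act · (id2 x ◇ eta) = ru x.

Definition is_right_comodule {A B : Ob K} (b : Hom1 A A) (de : Hom2 b (b ∘ b))
  (ep : Hom2 b (id1 A)) (x : Hom1 A B) (co : Hom2 x (x ∘ b)) : Prop :=
  ra x b b · (co ◇ id2 b) · co = (id2 x ◇ de) · co
  /\ (id2 x ◇ ep) · co = ru' x.

Definition is_module_comonad (c : YBop K) {A : Ob K} (b : Hom1 A A)
  (mu : Hom2 (b ∘ b) b) (eta : Hom2 (id1 A) b)
  (de : Hom2 b (b ∘ b)) (ep : Hom2 b (id1 A))
  (D : Hom1 A A) (deD : Hom2 D (D ∘ D)) (epD : Hom2 D (id1 A))
  (act : Hom2 (D ∘ b) D) : Prop :=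
  is_comonad D deD epD /\ is_right_module b mu eta D act
  /\ (act ◇ act) · mid D (c A D b) b · (deD ◇ de) = deD · act
  /\ epD · act = lu (id1 A) · (epD ◇ ep).

Definition is_comodule_monad (c : YBop K) {A : Ob K} (b : Hom1 A A)
  (mu : Hom2 (b ∘ b) b) (eta : Hom2 (id1 A) b)
  (de : Hom2 b (b ∘ b)) (ep : Hom2 b (id1 A))
  (t : Hom1 A A) (mut : Hom2 (t ∘ t) t) (etat : Hom2 (id1 A) t)
  (rho : Hom2 t (t ∘ b)) : Prop :=
  is_monad t mut etat /\ is_right_comodule b de ep t rho
  /\ (mut ◇ mu) · mid t (c A b t) b · (rho ◇ rho) = rho · mut
  /\ rho · etat = (etat ◇ eta) · lu' (id1 A).
End Structures.

Record BilaxData (K K' : TwoCatData) := {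
  F0 : Ob K -> Ob K';
  F1 : forall (A B : Ob K), Hom1 A B -> Hom1 (F0 A) (F0 B);
  F2 : forall (A B : Ob K) (f g : Hom1 A B), Hom2 f g -> Hom2 (F1 A B f) (F1 A B g);
  Flax2 : forall (A B C : Ob K) (g : Hom1 B C) (f : Hom1 A B),
      Hom2 (F1 B C g ∘ F1 A B f) (F1 A C (g ∘ f));
  Flax0 : forall (A : Ob K), Hom2 (id1 (F0 A)) (F1 A A (id1 A));
  Fcolax2 : forall (A B C : Ob K) (g : Hom1 B C) (f : Hom1 A B),
      Hom2 (F1 A C (g ∘ f)) (F1 B C g ∘ F1 A B f);
  Fcolax0 : forall (A : Ob K), Hom2 (F1 A A (id1 A)) (id1 (F0 A));
  Fnu : forall (B : Ob K) (g f : Hom1 B B),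
      Hom2 (F1 B B g ∘ F1 B B f) (F1 B B f ∘ F1 B B g)
}.
Arguments F0 {K K'} _ _ : rename.
Arguments F1 {K K'} _ {A B} : rename.
Arguments F2 {K K'} _ {A B f g} : rename.
Arguments Flax2 {K K'} _ {A B C} : rename.
Arguments Flax0 {K K'} _ A : rename.
Arguments Fcolax2 {K K'} _ {A B C} : rename.
Arguments Fcolax0 {K K'} _ A : rename.
Arguments Fnu {K K'} _ {B} : rename.

Record is_bilax (K : YBTwoCat) (K' : TwoCatData) (F : BilaxData K K') : Prop := {
  F2_comp : forall (A B : Ob K) (f g h : Hom1 A B) (β : Hom2 g h) (α : Hom2 f g),
      F2 F (β · α) = F2 F β · F2 F α;
  F2_id : forall (A B : Ob K) (f : Hom1 A B), F2 F (id2 f) = id2 (F1 F f);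
  lax2_nat : forall (A B C : Ob K) (g g' : Hom1 B C) (f f' : Hom1 A B)
      (β : Hom2 g g') (α : Hom2 f f'),
      Flax2 F g' f' · (F2 F β ◇ F2 F α) = F2 F (β ◇ α) · Flax2 F g f;
  lax_assoc : forall (A B C D : Ob K) (h : Hom1 C D) (g : Hom1 B C) (f : Hom1 A B),
      Flax2 F h (g ∘ f) · (id2 (F1 F h) ◇ Flax2 F g f) · ra (F1 F h) (F1 F g) (F1 F f)
      = F2 F (ra h g f) · Flax2 F (h ∘ g) f · (Flax2 F h g ◇ id2 (F1 F f));
  lax_unitl : forall (A B : Ob K) (f : Hom1 A B),
      Flax2 F (id1 B) f · (Flax0 F B ◇ id2 (F1 F f)) = F2 F (lu' f) · lu (F1 F f);
  lax_unitr : forall (A B : Ob K) (f : Hom1 A B),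
      Flax2 F f (id1 A) · (id2 (F1 F f) ◇ Flax0 F A) = F2 F (ru' f) · ru (F1 F f);
  colax2_nat : forall (A B C : Ob K) (g g' : Hom1 B C) (f f' : Hom1 A B)
      (β : Hom2 g g') (α : Hom2 f f'),
      (F2 F β ◇ F2 F α) · Fcolax2 F g f = Fcolax2 F g' f' · F2 F (β ◇ α);
  colax_assoc : forall (A B C D : Ob K) (h : Hom1 C D) (g : Hom1 B C) (f : Hom1 A B),
      ra (F1 F h) (F1 F g) (F1 F f) · (Fcolax2 F h g ◇ id2 (F1 F f)) · Fcolax2 F (h ∘ g) f
      = (id2 (F1 F h) ◇ Fcolax2 F g f) · Fcolax2 F h (g ∘ f) · F2 F (ra h g f);
  colax_unitl : forall (A B : Ob K) (f : Hom1 A B),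
      (Fcolax0 F B ◇ id2 (F1 F f)) · Fcolax2 F (id1 B) f = lu' (F1 F f) · F2 F (lu f);
  colax_unitr : forall (A B : Ob K) (f : Hom1 A B),
      (id2 (F1 F f) ◇ Fcolax0 F A) · Fcolax2 F f (id1 A) = ru' (F1 F f) · F2 F (ru f);
  nu_nat : forall (B : Ob K) (g g' f f' : Hom1 B B) (α : Hom2 g g') (β : Hom2 f f'),
      Fnu F g' f' · (F2 F α ◇ F2 F β) = (F2 F β ◇ F2 F α) · Fnu F g f;
  nu_YB : forall (B : Ob K) (h g f : Hom1 B B),
      (Fnu F g f ◇ id2 (F1 F h)) · lw3 (F1 F g) (Fnu F h f) · (Fnu F h g ◇ id2 (F1 F f))
      = lw3 (F1 F f) (Fnu F h g) · (Fnu F h f ◇ id2 (F1 F g)) · lw3 (F1 F h) (Fnu F g f);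
  (* nu is a left and right distributive law for the lax structure *)
  nu_lax_l : forall (B : Ob K) (h g f : Hom1 B B),
      Fnu F (h ∘ g) f · (Flax2 F h g ◇ id2 (F1 F f))
      = (id2 (F1 F f) ◇ Flax2 F h g) · ra (F1 F f) (F1 F h) (F1 F g)
        · (Fnu F h f ◇ id2 (F1 F g)) · ra' (F1 F h) (F1 F f) (F1 F g)
        · (id2 (F1 F h) ◇ Fnu F g f) · ra (F1 F h) (F1 F g) (F1 F f);
  nu_lax_r : forall (B : Ob K) (g f h : Hom1 B B),
      Fnu F g (f ∘ h) · (id2 (F1 F g) ◇ Flax2 F f h)
      = (Flax2 F f h ◇ id2 (F1 F g)) · ra' (F1 F f) (F1 F h) (F1 F g)
        · (id2 (F1 F f) ◇ Fnu F g h) · ra (F1 F f) (F1 F g) (F1 F h)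
        · (Fnu F g f ◇ id2 (F1 F h)) · ra' (F1 F g) (F1 F f) (F1 F h);
  (* ... and for the colax structure *)
  nu_colax_l : forall (B : Ob K) (g h k : Hom1 B B),
      (Fcolax2 F h k ◇ id2 (F1 F g)) · Fnu F g (h ∘ k)
      = ra' (F1 F h) (F1 F k) (F1 F g) · (id2 (F1 F h) ◇ Fnu F g k)
        · ra (F1 F h) (F1 F g) (F1 F k) · (Fnu F g h ◇ id2 (F1 F k))
        · ra' (F1 F g) (F1 F h) (F1 F k) · (id2 (F1 F g) ◇ Fcolax2 F h k);
  nu_colax_r : forall (B : Ob K) (h k g : Hom1 B B),
      (id2 (F1 F g) ◇ Fcolax2 F h k) · Fnu F (h ∘ k) g
      = ra (F1 F g) (F1 F h) (F1 F k) · (Fnu F h g ◇ id2 (F1 F k))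
        · ra' (F1 F h) (F1 F g) (F1 F k) · (id2 (F1 F h) ◇ Fnu F k g)
        · ra (F1 F h) (F1 F k) (F1 F g) · (Fcolax2 F h k ◇ id2 (F1 F g));
  nu_unit_l : forall (B : Ob K) (f : Hom1 B B),
      (id2 (F1 F f) ◇ Fcolax0 F B) · Fnu F (id1 B) f · (Flax0 F B ◇ id2 (F1 F f))
      = ru' (F1 F f) · lu (F1 F f);
  nu_unit_r : forall (B : Ob K) (f : Hom1 B B),
      (Fcolax0 F B ◇ id2 (F1 F f)) · Fnu F f (id1 B) · (id2 (F1 F f) ◇ Flax0 F B)
      = lu' (F1 F f) · ru (F1 F f);
  bilax_mid : forall (A B C : Ob K) (k : Hom1 A B) (h f : Hom1 B B) (g : Hom1 B C),
      (Flax2 F g h ◇ Flax2 F f k) · mid (F1 F g) (Fnu F f h) (F1 F k)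
        · (Fcolax2 F g f ◇ Fcolax2 F h k)
      = Fcolax2 F (g ∘ h) (f ∘ k) · F2 F (mid g (yc B f h) k) · Flax2 F (g ∘ f) (h ∘ k);
  bilax_unit1 : forall (A : Ob K),
      (Flax0 F A ◇ Flax0 F A) · lu' (id1 (F0 F A))
      = Fcolax2 F (id1 A) (id1 A) · F2 F (lu' (id1 A)) · Flax0 F A;
  bilax_unit2 : forall (A : Ob K),
      lu (id1 (F0 F A)) · (Fcolax0 F A ◇ Fcolax0 F A)
      = Fcolax0 F A · F2 F (lu (id1 A)) · Flax2 F (id1 A) (id1 A);
  bilax_unit3 : forall (A : Ob K), Fcolax0 F A · Flax0 F A = id2 (id1 (F0 F A))
}.

Definition compatible_YB {K K' : YBTwoCat} (F : BilaxData K K') : Prop :=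
  forall (B : Ob K) (f g : Hom1 B B), Fnu F f g = yc (F0 F B) (F1 F f) (F1 F g).

(** Every axiom of [F D] (resp. [F t]) is the image under [F] of the
    corresponding axiom of [D] (resp. [t]).  The (co)associativity and
    (co)unit laws transport along the lax (resp. colax) structure alone, by
    naturality and coherence of [F^2] (resp. [F_2]).  The compatibility of the
    action (coaction) with the comultiplication (multiplication) transports by
    the bilaxity condition relating [F^2], [F_2] and [ν], where compatibility
    identifies [ν] with [c']; the counit (unit) compatibility transports by the unit
    bilaxity conditions. *)

From Stdlib Require Import ssreflect.

Section TwoCategory.
Context {K : TwoCatData} (HK : is_TwoCat K).

Lemma vcompA {A B : Ob K} {f g h k : Hom1 A B}
    (γ : Hom2 h k) (β : Hom2 g h) (α : Hom2 f g) :
  γ · (β · α) = γ · β · α.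
Proof. exact: vcomp_assoc. Qed.

Lemma vcomp_postcomp2 {A B : Ob K} {f g h k : Hom1 A B}
    {β : Hom2 g h} {α : Hom2 f g} {γ : Hom2 f h} :
  β · α = γ -> forall (δ : Hom2 h k), δ · β · α = δ · γ.
Proof. by move=> <- δ; rewrite vcompA. Qed.

Lemma vcomp_postcomp3 {A B : Ob K} {f g h k l : Hom1 A B}
    {γ : Hom2 h k} {β : Hom2 g h} {α : Hom2 f g} {ε : Hom2 f k} :
  γ · β · α = ε -> forall (δ : Hom2 k l), δ · γ · β · α = δ · ε.
Proof. by move=> <- δ; rewrite !vcompA. Qed.

Lemma eqcellK {A B : Ob K} {f g : Hom1 A B} (p : f = g) :
  eqcell p · eqcell (eq_sym p) = id2 g.
Proof. by destruct p; apply: (vcomp_idl _ HK). Qed.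

Lemma luK {A B : Ob K} (f : Hom1 A B) : lu f · lu' f = id2 f.
Proof. exact: eqcellK. Qed.

Lemma ruK {A B : Ob K} (f : Hom1 A B) : ru f · ru' f = id2 f.
Proof. exact: eqcellK. Qed.

Lemma whiskerR_vcomp {A B C : Ob K} {g g' g'' : Hom1 B C} (f : Hom1 A B)
    (β' : Hom2 g' g'') (β : Hom2 g g') :
  (β' · β) ◇ id2 f = (β' ◇ id2 f) · (β ◇ id2 f).
Proof. by rewrite -interchange // vcomp_idl. Qed.

Lemma whiskerL_vcomp {A B C : Ob K} (g : Hom1 B C) {f f' f'' : Hom1 A B}
    (α' : Hom2 f' f'') (α : Hom2 f f') :
  id2 g ◇ (α' · α) = (id2 g ◇ α') · (id2 g ◇ α).
Proof. by rewrite -interchange // vcomp_idl. Qed.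

End TwoCategory.

Section BilaxFunctor.
Context {K : YBTwoCat} {K' : TwoCatData} (HK' : is_TwoCat K')
  {F : BilaxData K K'} (HF : is_bilax K K' F).
Let HK := ycat_ax K.

Ltac vassoc := rewrite ?(vcompA HK') ?(vcompA HK).

Lemma F2_vcomp {A B : Ob K} {f g h : Hom1 A B} (β : Hom2 g h) (α : Hom2 f g) :
  F2 F β · F2 F α = F2 F (β · α).
Proof. by rewrite (F2_comp _ _ _ HF). Qed.

Lemma F2_vcompl {A B : Ob K} {f g h : Hom1 A B} {k} (δ : Hom2 (F1 F h) k)
    (β : Hom2 g h) (α : Hom2 f g) :
  δ · F2 F β · F2 F α = δ · F2 F (β · α).
Proof. by rewrite -(vcompA HK') F2_vcomp. Qed.

Lemma lax2_natR {A B C : Ob K} {g g' : Hom1 B C} (f : Hom1 A B) (β : Hom2 g g') :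
  Flax2 F g' f · (F2 F β ◇ id2 (F1 F f)) = F2 F (β ◇ id2 f) · Flax2 F g f.
Proof. rewrite -(F2_id _ _ _ HF); exact: (lax2_nat _ _ _ HF). Qed.

Lemma lax2_natL {A B C : Ob K} (g : Hom1 B C) {f f' : Hom1 A B} (α : Hom2 f f') :
  Flax2 F g f' · (id2 (F1 F g) ◇ F2 F α) = F2 F (id2 g ◇ α) · Flax2 F g f.
Proof. rewrite -(F2_id _ _ _ HF); exact: (lax2_nat _ _ _ HF). Qed.

Lemma colax2_natR {A B C : Ob K} {g g' : Hom1 B C} (f : Hom1 A B) (β : Hom2 g g') :
  (F2 F β ◇ id2 (F1 F f)) · Fcolax2 F g f = Fcolax2 F g' f · F2 F (β ◇ id2 f).
Proof. rewrite -(F2_id _ _ _ HF); exact: (colax2_nat _ _ _ HF). Qed.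

Lemma colax2_natL {A B C : Ob K} (g : Hom1 B C) {f f' : Hom1 A B} (α : Hom2 f f') :
  (id2 (F1 F g) ◇ F2 F α) · Fcolax2 F g f = Fcolax2 F g f' · F2 F (id2 g ◇ α).
Proof. rewrite -(F2_id _ _ _ HF); exact: (colax2_nat _ _ _ HF). Qed.

Lemma lax_right_module {A B : Ob K} (b : Hom1 A A) mu eta (x : Hom1 A B) act :
  is_right_module b mu eta x act ->
  is_right_module (F1 F b) (F2 F mu · Flax2 F b b) (F2 F eta · Flax0 F A)
    (F1 F x) (F2 F act · Flax2 F x b).
Proof.
move=> [act_assoc act_unit]; split.
- rewrite (whiskerR_vcomp HK') (whiskerL_vcomp HK'); vassoc.
  rewrite (vcomp_postcomp2 HK' (lax2_natR _ _)).
  rewrite (vcomp_postcomp2 HK' (lax2_natL _ _)); vassoc.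
  rewrite (vcomp_postcomp3 HK' (lax_assoc _ _ _ HF _ _ _ _ _ _ _)); vassoc.
  by rewrite !F2_vcomp act_assoc.
- rewrite (whiskerL_vcomp HK'); vassoc.
  rewrite (vcomp_postcomp2 HK' (lax2_natL _ _)); vassoc.
  rewrite (vcomp_postcomp2 HK' (lax_unitr _ _ _ HF _ _ _)) !F2_vcomp; vassoc.
  rewrite act_unit F2_vcomp (ruK HK) (F2_id _ _ _ HF); exact: (vcomp_idl _ HK').
Qed.

Lemma lax_monad {A : Ob K} (t : Hom1 A A) mu eta :
  is_monad t mu eta ->
  is_monad (F1 F t) (F2 F mu · Flax2 F t t) (F2 F eta · Flax0 F A).
Proof.
move=> [mu_assoc [mu_unitl mu_unitr]].
have [Fmu_assoc Fmu_unitr] :=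
  lax_right_module t mu eta t mu (conj mu_assoc mu_unitr).
split=> //; split=> //.
rewrite (whiskerR_vcomp HK'); vassoc.
rewrite (vcomp_postcomp2 HK' (lax2_natR _ _)); vassoc.
rewrite (vcomp_postcomp2 HK' (lax_unitl _ _ _ HF _ _ _)) !F2_vcomp; vassoc.
rewrite mu_unitl F2_vcomp (luK HK) (F2_id _ _ _ HF); exact: (vcomp_idl _ HK').
Qed.

Lemma colax_right_comodule {A B : Ob K} (b : Hom1 A A) de ep (x : Hom1 A B) co :
  is_right_comodule b de ep x co ->
  is_right_comodule (F1 F b) (Fcolax2 F b b · F2 F de) (Fcolax0 F A · F2 F ep)
    (F1 F x) (Fcolax2 F x b · F2 F co).
Proof.
move=> [co_coassoc co_counit]; split.
- rewrite (whiskerR_vcomp HK') (whiskerL_vcomp HK'); vassoc.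
  rewrite (vcomp_postcomp2 HK' (colax2_natR _ _)); vassoc.
  rewrite (vcomp_postcomp2 HK' (colax2_natL _ _)); vassoc.
  rewrite (colax_assoc _ _ _ HF); vassoc.
  by rewrite !F2_vcompl; vassoc; rewrite co_coassoc.
- rewrite (whiskerL_vcomp HK'); vassoc.
  rewrite (vcomp_postcomp2 HK' (colax2_natL _ _)); vassoc.
  rewrite (colax_unitr _ _ _ HF) !F2_vcompl; vassoc.
  rewrite (vcomp_postcomp2 HK co_counit) (ruK HK) (F2_id _ _ _ HF).
  exact: (vcomp_idr _ HK').
Qed.

Lemma colax_comonad {A : Ob K} (d : Hom1 A A) de ep :
  is_comonad d de ep ->
  is_comonad (F1 F d) (Fcolax2 F d d · F2 F de) (Fcolax0 F A · F2 F ep).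
Proof.
move=> [de_coassoc [de_counitl de_counitr]].
have [Fde_coassoc Fde_counitr] :=
  colax_right_comodule d de ep d de (conj de_coassoc de_counitr).
split=> //; split=> //.
rewrite (whiskerR_vcomp HK'); vassoc.
rewrite (vcomp_postcomp2 HK' (colax2_natR _ _)); vassoc.
rewrite (colax_unitl _ _ _ HF) !F2_vcompl; vassoc.
rewrite (vcomp_postcomp2 HK de_counitl) (luK HK) (F2_id _ _ _ HF).
exact: (vcomp_idr _ HK').
Qed.

Lemma bilax_mid_natural {A B C : Ob K} (k : Hom1 A B) (h f : Hom1 B B) (g : Hom1 B C)
    {x u : Hom1 B C} {y v : Hom1 A B}
    (α : Hom2 (g ∘ h) u) (β : Hom2 (f ∘ k) v)
    (P : Hom2 x (g ∘ f)) (Q : Hom2 y (h ∘ k)) :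
  ((F2 F α · Flax2 F g h) ◇ (F2 F β · Flax2 F f k))
    · mid (F1 F g) (Fnu F f h) (F1 F k)
    · ((Fcolax2 F g f · F2 F P) ◇ (Fcolax2 F h k · F2 F Q))
  = Fcolax2 F u v · F2 F ((α ◇ β) · mid g (yc B f h) k · (P ◇ Q)) · Flax2 F x y.
Proof.
have := bilax_mid _ _ _ HF _ _ _ k h f g.
(* Abstract the [mid] cells, which [vassoc] would otherwise unfold. *)
move: (mid (F1 F g) _ _) (mid g _ _) => m m' Hmid.
rewrite !(interchange _ HK'); vassoc.
rewrite (vcomp_postcomp3 HK' Hmid); vassoc.
rewrite (colax2_nat _ _ _ HF); vassoc.
rewrite (vcomp_postcomp2 HK' (lax2_nat _ _ _ HF _ _ _ _ _ _ _ _ _)); vassoc.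
by rewrite !F2_vcompl (vcompA HK).
Qed.

Lemma bilax_counit_natural {A : Ob K} {x y : Hom1 A A}
    (α : Hom2 x (id1 A)) (β : Hom2 y (id1 A)) :
  lu (id1 (F0 F A)) · ((Fcolax0 F A · F2 F α) ◇ (Fcolax0 F A · F2 F β))
  = Fcolax0 F A · F2 F (lu (id1 A) · (α ◇ β)) · Flax2 F x y.
Proof.
rewrite (interchange _ HK'); vassoc.
rewrite (bilax_unit2 _ _ _ HF) -!(vcompA HK') (lax2_nat _ _ _ HF); vassoc.
by rewrite F2_vcompl.
Qed.

Lemma bilax_unit_natural {A : Ob K} {x y : Hom1 A A}
    (α : Hom2 (id1 A) x) (β : Hom2 (id1 A) y) :
  ((F2 F α · Flax0 F A) ◇ (F2 F β · Flax0 F A)) · lu' (id1 (F0 F A))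
  = Fcolax2 F x y · F2 F ((α ◇ β) · lu' (id1 A)) · Flax0 F A.
Proof.
rewrite (interchange _ HK'); vassoc.
rewrite -(vcompA HK') (bilax_unit1 _ _ _ HF); vassoc.
by rewrite (colax2_nat _ _ _ HF) F2_vcompl.
Qed.

End BilaxFunctor.

Section CompatibleBilaxFunctor.
Context {K K' : YBTwoCat} {F : BilaxData K K'}
  (HF : is_bilax K K' F) (Hcompat : compatible_YB F).
Let HK' := ycat_ax K'.

Lemma bilax_module_comonad {A : Ob K} (b : Hom1 A A) mu eta de ep D deD epD act :
  is_module_comonad (@yc K) b mu eta de ep D deD epD act ->
  is_module_comonad (@yc K') (F1 F b)
    (F2 F mu · Flax2 F b b) (F2 F eta · Flax0 F A)
    (Fcolax2 F b b · F2 F de) (Fcolax0 F A · F2 F ep)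
    (F1 F D) (Fcolax2 F D D · F2 F deD) (Fcolax0 F A · F2 F epD)
    (F2 F act · Flax2 F D b).
Proof.
move=> [comonadD [moduleD [act_comult act_counit]]].
split; first exact: (colax_comonad HK' HF).
split; first exact: (lax_right_module HK' HF).
split.
- by rewrite -Hcompat (bilax_mid_natural HK' HF) act_comult !(vcompA HK') F2_vcompl.
- by rewrite (bilax_counit_natural HK' HF) -act_counit !(vcompA HK') F2_vcompl.
Qed.

Lemma bilax_comodule_monad {A : Ob K} (b : Hom1 A A) mu eta de ep t mut etat rho :
  is_comodule_monad (@yc K) b mu eta de ep t mut etat rho ->
  is_comodule_monad (@yc K') (F1 F b)
    (F2 F mu · Flax2 F b b) (F2 F eta · Flax0 F A)
    (Fcolax2 F b b · F2 F de) (Fcolax0 F A · F2 F ep)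
    (F1 F t) (F2 F mut · Flax2 F t t) (F2 F etat · Flax0 F A)
    (Fcolax2 F t b · F2 F rho).
Proof.
move=> [monadt [comodulet [rho_mult rho_unit]]].
split; first exact: (lax_monad HK' HF).
split; first exact: (colax_right_comodule HK' HF).
split.
- by rewrite -Hcompat (bilax_mid_natural HK' HF) rho_mult !(vcompA HK') F2_vcompl.
- by rewrite (bilax_unit_natural HK' HF) -rho_unit !(vcompA HK') F2_vcompl.
Qed.

End CompatibleBilaxFunctor.

Theorem proposition4p15 (K K' : YBTwoCat) (F : BilaxData K K')
  (HF : is_bilax K K' F) (Hcompat : compatible_YB F)
  (A : Ob K) (b : Hom1 A A) (mu : Hom2 (b ∘ b) b) (eta : Hom2 (id1 A) b)
  (de : Hom2 b (b ∘ b)) (ep : Hom2 b (id1 A))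
  (Hb : is_bimonad (@yc K) b mu eta de ep) :
  (* (i) module comonads *)
  (forall (D : Hom1 A A) (deD : Hom2 D (D ∘ D)) (epD : Hom2 D (id1 A))
          (act : Hom2 (D ∘ b) D),
     is_module_comonad (@yc K) b mu eta de ep D deD epD act ->
     is_module_comonad (@yc K') (F1 F b)
       (F2 F mu · Flax2 F b b) (F2 F eta · Flax0 F A)
       (Fcolax2 F b b · F2 F de) (Fcolax0 F A · F2 F ep)
       (F1 F D) (Fcolax2 F D D · F2 F deD) (Fcolax0 F A · F2 F epD)
       (F2 F act · Flax2 F D b))
  /\
  (* (ii) comodule monads *)
  (forall (t : Hom1 A A) (mut : Hom2 (t ∘ t) t) (etat : Hom2 (id1 A) t)
          (rho : Hom2 t (t ∘ b)),
     is_comodule_monad (@yc K) b mu eta de ep t mut etat rho ->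
     is_comodule_monad (@yc K') (F1 F b)
       (F2 F mu · Flax2 F b b) (F2 F eta · Flax0 F A)
       (Fcolax2 F b b · F2 F de) (Fcolax0 F A · F2 F ep)
       (F1 F t) (F2 F mut · Flax2 F t t) (F2 F etat · Flax0 F A)
       (Fcolax2 F t b · F2 F rho)).
Proof.
split=> [D deD epD act | t mut etat rho].
- exact: (bilax_module_comonad HF Hcompat).
- exact: (bilax_comodule_monad HF Hcompat).
Qed.
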